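(* Fix $\theta>0$ and let $n\to\infty$ along integers for which $m=\theta n$ is an integer. If $\mathbf s$ is uniform on $\Phi^*_{m,n}$, then $$\mathbb E\left(\prod_{\nu=1}^m(s_\nu+1)\right)\sim\left(\frac{2(\theta+1)}{2\theta+1}\right)^{1/2}\left[\frac{(2\theta+1)^{2\theta+1}}{(4\theta)^\theta(\theta+1)^{\theta+1}}\right]^n .$$ In particular, for $\theta=1$ this is $\sim(4/3)^{1/2}(27/16)^n$.
   Context: $\Phi^*_{m,n}$ is the set of arrays $\mathbf s=(s_1,\dots,s_m)$ of nonnegative integers with $s_1+\dots+s_m=n$. $f\sim g$ means $f/g\to1$. *)

From mathcomp Require Import all_boot all_order all_algebra.
From mathcomp Require Import all_classical all_reals all_analysis.
Set Implicit Arguments. Unset Strict Implicit. Unset Printing Implicit Defensive.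
Import Order.TTheory GRing.Theory Num.Theory.
Local Open Scope ring_scope.

(* Phi^*_{m,n}: arrays s = (s_1,...,s_m) of nonnegative integers summing to n.
   Entries are necessarily <= n, so we index them by 'I_n.+1. *)
Definition Phi (m n : nat) : {set {ffun 'I_m -> 'I_n.+1}} :=
  [set s : {ffun 'I_m -> 'I_n.+1} | (\sum_(i < m) (s i : nat))%N == n].

Definition expect_prod (R : realType) (m n : nat) : R :=
  (\sum_(s in Phi m n) \prod_(i < m) ((s i : nat)%:R + 1)) / (#|Phi m n|%:R).

Definition rhs_asym (R : realType) (theta : R) (n : nat) : R :=
  Num.sqrt (2 * (theta + 1) / (2 * theta + 1)) *
  ((2 * theta + 1) `^ (2 * theta + 1) /
     ((4 * theta) `^ theta * (theta + 1) `^ (theta + 1))) ^+ n.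

From mathcomp Require Import all_boot all_order all_algebra.
From mathcomp Require Import all_classical all_reals all_analysis.
From mathcomp Require Import ring lra.
Import Order.TTheory GRing.Theory Num.Theory.
Set Implicit Arguments. Unset Strict Implicit. Unset Printing Implicit Defensive.
Local Open Scope ring_scope.

(* Choosing the monomial X^(s i) in the i-th of m factors
      shows that sum_(s in Phi m n) prod_i c (s i) is the coefficient of X^n
      in (sum_(j <= n) c j X^j)^m.  Up to degree n, 1 + X + ... + X^n acts as
      (1 - X)^-1 and sum_j (j + 1) X^j as (1 - X)^-2; as the coefficients of
      (1 - X)^-k are C(t + k - 1, t), we get #|Phi m n| = C(n + m - 1, n) and
        E = C(n + 2m - 1, n) / C(n + m - 1, n).
   2. Stirling's formula without its constant.  The remainder
      r(x) = ln x! - (x + 1/2) ln x + x satisfies |r x - r y| <= 1/(2m) for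
      x, y >= m >= 1, by telescoping one-step bounds obtained from Taylor
      bounds of ln at 1.
   3. Writing both binomials through r, for m = theta n every main term (and
      the unknown constant of Stirling's formula) cancels exactly:
        E / rhs = exp(r(n + 2m) + r(m) - r(2m) - r(n + m)),
      and the exponent is at most 1/m in absolute value; theta = 1 is the
      instance rhs_asym 1 n = sqrt(4/3) (27/16)^n. *)

Lemma hockey_stick (t j : nat) :
  (\sum_(k < t.+1) 'C(k + j - 1, k) = 'C(t + j, t))%N.
Proof.
elim: t => [|t IH]; first by rewrite big_ord1 /= !bin0.
by rewrite big_ord_recr /= IH addSn binS addnC subn1.
Qed.

Section CoefficientExtraction.
Variable R : comNzRingType.
Implicit Types (p q r : {poly R}) (c : nat -> R).

Definition trunc_series (n : nat) c : {poly R} :=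
  \sum_(j < n.+1) (c j)%:P * 'X^j.

Lemma coef_trunc_series n c t : (t <= n)%N -> (trunc_series n c)`_t = c t.
Proof.
move=> tn; rewrite /trunc_series coef_sum (bigD1 (Ordinal (tn : (t < n.+1)%N))) //=.
rewrite coefCM coefXn eqxx mulr1 big1 ?addr0 // => j jt.
rewrite coefCM coefXn; case: eqP => [tj|]; last by rewrite mulr0.
by move: jt; rewrite -(inj_eq val_inj) /= tj eqxx.
Qed.

(* Expanding the m-fold product, the choice of the monomial X^(s i) in the
   i-th factor contributes to X^n exactly when s lies in Phi m n. *)
Lemma sum_Phi_coef m n c :
  \sum_(s in Phi m n) \prod_(i < m) c (s i) = (trunc_series n c ^+ m)`_n.
Proof.
have -> : trunc_series n c ^+ m = \prod_(i < m) trunc_series n c.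
  by rewrite prodr_const card_ord.
rewrite /trunc_series bigA_distr_bigA coef_sum.
rewrite [RHS](bigID (fun s : {ffun 'I_m -> 'I_n.+1} => s \in Phi m n)) /=.
rewrite [X in _ = _ + X]big1 ?addr0 => [|s]; last first.
  rewrite inE => /negbTE sn.
  by rewrite big_split /= -rmorph_prod prodrXr coefCM coefXn eq_sym sn mulr0.
apply: eq_big => // s; rewrite inE => /eqP sn.
by rewrite big_split /= -rmorph_prod prodrXr coefCM coefXn sn eqxx mulr1.
Qed.

Definition agree_upto n p q := forall t, (t <= n)%N -> p`_t = q`_t.

(* Coefficients of degree <= n of a product only see the coefficients of
   degree <= n of the factors; this lets us compute in truncations. *)
Lemma agree_upto_mulr n p q r : agree_upto n p q -> agree_upto n (p * r) (q * r).
Proof.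
move=> pq t tn; rewrite !coefM; apply: eq_bigr => i _.
by rewrite pq // (leq_trans _ tn) // -ltnS.
Qed.

Lemma agree_upto_exp n p q k : agree_upto n p q -> agree_upto n (p ^+ k) (q ^+ k).
Proof.
move=> pq; elim: k => [|k IH] //.
rewrite !exprSr => t tn; rewrite (agree_upto_mulr p IH tn) // [_ * p]mulrC [_ * q]mulrC.
exact: (agree_upto_mulr _ pq tn).
Qed.

(* Below degree n, the k-th power of 1 + X + ... + X^n behaves like
   (1 - X)^-k, whose coefficients are the negative binomial numbers. *)
Lemma coef_geometric_exp n k t : (t <= n)%N ->
  (trunc_series n (fun=> 1) ^+ k)`_t = ('C(t + k - 1, t))%:R.
Proof.
elim: k t => [|k IH] t tn.
  by rewrite expr0 coefC addn0; case: t tn => [|t] _ //=; rewrite subn1 bin_small.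
rewrite exprS coefM.
rewrite (eq_bigr (fun i : 'I_t.+1 => ('C((t - i) + k - 1, t - i))%:R)) => [|i _].
  rewrite -natr_sum (reindex_inj rev_ord_inj) /=.
  rewrite (eq_bigr (fun i : 'I_t.+1 => 'C(i + k - 1, i))) => [|i _].
    by rewrite hockey_stick addnS subn1.
  by rewrite subKn // -ltnS.
have it : (i <= n)%N by rewrite (leq_trans _ tn) // -ltnS.
by rewrite coef_trunc_series // mul1r IH // (leq_trans (leq_subr _ _)).
Qed.

Lemma trunc_series_succ_agree n :
  agree_upto n (trunc_series n (fun j => j%:R + 1)) (trunc_series n (fun=> 1) ^+ 2).
Proof.
move=> t tn; rewrite coef_trunc_series // coef_geometric_exp //.
by rewrite addn2 subn1 /= binSn -addn1 natrD.
Qed.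

Lemma card_Phi m n : (#|Phi m n|%:R : R) = ('C(n + m - 1, n))%:R.
Proof.
rewrite -sum1_card natr_sum.
rewrite (eq_bigr (fun s : {ffun 'I_m -> 'I_n.+1} => \prod_(i < m) (fun=> 1 : R) (s i))).
  by rewrite (sum_Phi_coef m n (fun=> 1)) coef_geometric_exp.
by move=> s _; rewrite big1.
Qed.

Lemma sum_Phi_prod_succ m n :
  \sum_(s in Phi m n) \prod_(i < m) ((s i : nat)%:R + 1) = ('C(n + 2 * m - 1, n))%:R :> R.
Proof.
rewrite (sum_Phi_coef m n (fun j => j%:R + 1)).
rewrite (agree_upto_exp m (@trunc_series_succ_agree n) (leqnn n)).
by rewrite -exprM coef_geometric_exp.
Qed.

End CoefficientExtraction.

Lemma expect_prod_binom (R : realType) m n :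
  expect_prod R m n = ('C(n + 2 * m - 1, n))%:R / ('C(n + m - 1, n))%:R.
Proof. by rewrite /expect_prod sum_Phi_prod_succ card_Phi. Qed.

Section Logarithm.
Variable R : realType.
Implicit Types (a b x y u : R) (f D : R -> R).

Lemma ge0_derive_nondecreasing f D a b : 0 < a ->
  (forall x, 0 < x -> is_derive x 1 f (D x)) ->
  (forall x, a < x -> 0 <= D x) -> a <= b -> f a <= f b.
Proof.
move=> a0 df Dge0 ab; apply: (@ger0_derive1_ndecr R f a b) => //.
- move=> x; rewrite in_itv /= => /andP[ax _].
  have dfx := df x (lt_trans a0 ax); exact: ex_derive.
- move=> x; rewrite in_itv /= => /andP[ax _]; have := df x (lt_trans a0 ax) => dfx.
  by rewrite derive1E derive_val; apply: Dge0.
- apply: derivable_within_continuous => x; rewrite in_itv /= => /andP[ax _].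
  have dfx := df x (lt_le_trans a0 ax); exact: ex_derive.
Qed.

(* Third-order Taylor upper bound for ln at 1; the error term has
   derivative (y - 1)^3 / y >= 0. *)
Lemma ln_le_taylor3 y : 1 <= y ->
  ln y <= (y - 1) - (y - 1) ^+ 2 / 2 + (y - 1) ^+ 3 / 3.
Proof.
move=> y1; pose g : R -> R := id - cst 1.
pose f : R -> R := g - cst (2^-1) * g ^+ 2 + cst (3^-1) * g ^+ 3 - @ln R.
have df x : 0 < x -> is_derive x 1 f ((x - 1) ^+ 3 / x).
  move=> x0; have := is_derive1_ln x0 => dln; apply: is_derive_eq.
  by rewrite /g !fctE /= -![_ *: _]/(_ * _); field; rewrite gt_eqF.
have Dge0 x : 1 < x -> 0 <= (x - 1) ^+ 3 / x.
  by move=> x1; apply: divr_ge0; [apply: exprn_ge0|]; lra.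
have := @ge0_derive_nondecreasing f _ 1 y ltr01 df Dge0 y1.
by rewrite /f /g !fctE /= ln1 subrr !expr0n /=; lra.
Qed.

(* Fourth-order Taylor lower bound for ln at 1; the error term has
   derivative (y - 1)^4 / y >= 0. *)
Lemma taylor4_le_ln y : 1 <= y ->
  (y - 1) - (y - 1) ^+ 2 / 2 + (y - 1) ^+ 3 / 3 - (y - 1) ^+ 4 / 4 <= ln y.
Proof.
move=> y1; pose g : R -> R := id - cst 1.
pose f : R -> R :=
  @ln R - (g - cst (2^-1) * g ^+ 2 + cst (3^-1) * g ^+ 3 - cst (4^-1) * g ^+ 4).
have df x : 0 < x -> is_derive x 1 f ((x - 1) ^+ 4 / x).
  move=> x0; have := is_derive1_ln x0 => dln; apply: is_derive_eq.
  by rewrite /g !fctE /= -![_ *: _]/(_ * _); field; rewrite gt_eqF.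
have Dge0 x : 1 < x -> 0 <= (x - 1) ^+ 4 / x.
  by move=> x1; apply: divr_ge0; [apply: exprn_ge0|]; lra.
have := @ge0_derive_nondecreasing f _ 1 y ltr01 df Dge0 y1.
by rewrite /f /g !fctE /= ln1 subrr !expr0n /=; lra.
Qed.

(* (1/u + 1/2) ln (1 + u) = 1 + O(u^2): the quantity controlling one step
   of the Stirling remainder below, with u = 1/x. *)
Lemma ln1p_remainder u : 0 < u <= 1 ->
  `|(u^-1 + 2^-1) * ln (1 + u) - 1| <= u ^+ 2 / (2 * (1 + u)).
Proof.
case/andP=> u0 u1; have y1 : 1 <= 1 + u by lra.
have := ln_le_taylor3 y1; have := taylor4_le_ln y1.
rewrite [1 + u - 1]addrC addKr => lo up.
have c0 : 0 <= u^-1 + 2^-1 by rewrite addr_ge0 // invr_ge0 ltW.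
have {}up := ler_wpM2l c0 up; have {}lo := ler_wpM2l c0 lo.
have e3 : (u^-1 + 2^-1) * (u - u ^+ 2 / 2 + u ^+ 3 / 3) = 1 + u ^+ 2 / 12 + u ^+ 3 / 6.
  by field; rewrite gt_eqF.
have e4 : (u^-1 + 2^-1) * (u - u ^+ 2 / 2 + u ^+ 3 / 3 - u ^+ 4 / 4)
          = 1 + u ^+ 2 / 12 - u ^+ 3 / 12 - u ^+ 4 / 8.
  by field; rewrite gt_eqF.
rewrite e3 in up; rewrite e4 in lo.
have quarter : u ^+ 2 / 4 <= u ^+ 2 / (2 * (1 + u)).
  rewrite ler_pdivlMr ?mulr_gt0 //; try lra.
  by rewrite mulrAC ler_pdivrMr // ler_wpM2l ?sqr_ge0 //; lra.
have u2 : 0 <= u ^+ 2 := sqr_ge0 u.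
have u32 : u ^+ 3 <= u ^+ 2 by rewrite exprS ler_piMl.
have u42 : u ^+ 4 <= u ^+ 2 by rewrite (exprD u 2 2) ler_piMr // exprn_ile1 // ltW.
rewrite ler_norml; apply/andP; split; lra.
Qed.

End Logarithm.

Section StirlingRemainder.
Variable R : realType.

(* r(x) = ln x! - (x + 1/2) ln x + x; by Stirling's formula r(x) tends to
   ln sqrt(2 pi), but we only need that r is Cauchy at an explicit rate. *)
Definition stirling_rem (x : nat) : R :=
  ln x`!%:R - (x%:R + 2^-1) * ln x%:R + x%:R.

Lemma stirling_rem_step x : (0 < x)%N ->
  stirling_rem x - stirling_rem x.+1 = (x%:R + 2^-1) * ln (x.+1%:R / x%:R) - 1.
Proof.
move=> x0; rewrite /stirling_rem factS natrM lnM ?posrE ?ltr0n ?fact_gt0 //.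
by rewrite ln_div ?posrE ?ltr0n // -[x.+1]addn1 natrD; ring.
Qed.

Lemma stirling_rem_step_bound x : (0 < x)%N ->
  `|stirling_rem x - stirling_rem x.+1| <= 2^-1 * (x%:R^-1 - x.+1%:R^-1).
Proof.
move=> x0; have X0 : 0 < (x%:R : R) by rewrite ltr0n.
have u01 : 0 < (x%:R : R)^-1 <= 1 by rewrite invr_gt0 X0 invf_le1 // ler1n.
rewrite stirling_rem_step // -[x.+1]addn1 natrD; set X := (x%:R : R).
have -> : (X + 1) / X = 1 + X^-1 by rewrite mulrDl divff ?gt_eqF // mul1r.
rewrite -{1}(invrK X); apply: le_trans (ln1p_remainder u01) _.
suff -> : X^-1 ^+ 2 / (2 * (1 + X^-1)) = 2^-1 * (X^-1 - (X + 1)^-1) by [].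
by field; rewrite !gt_eqF //; lra.
Qed.

Lemma stirling_rem_telescope x k : (0 < x)%N ->
  `|stirling_rem x - stirling_rem (x + k)| <= 2^-1 * (x%:R^-1 - (x + k)%:R^-1).
Proof.
move=> x0; elim: k => [|k IH]; first by rewrite addn0 !subrr normr0 mulr0.
have step := stirling_rem_step_bound (leq_trans x0 (leq_addr k x)).
rewrite addnS; apply: le_trans (ler_distD (stirling_rem (x + k)) _ _) _.
by apply: le_trans (lerD IH step) _; rewrite -mulrDr addrA subrK.
Qed.

Lemma stirling_rem_cauchy m x y : (0 < m)%N -> (m <= x)%N -> (m <= y)%N ->
  `|stirling_rem x - stirling_rem y| <= 2^-1 * m%:R^-1.
Proof.
wlog xy : x y / (x <= y)%N.
  move=> gen m0 mx my; case: (leqP x y) => [xy|/ltnW yx]; first exact: gen.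
  by rewrite distrC; apply: gen.
move=> m0 mx my; have x0 : (0 < x)%N := leq_trans m0 mx.
have := stirling_rem_telescope (y - x) x0; rewrite subnKC // => tele.
apply: le_trans tele _; rewrite ler_pM2l // ?invr_gt0 //.
have : 0 <= (y%:R : R)^-1 by rewrite invr_ge0.
have : (x%:R : R)^-1 <= m%:R^-1 by rewrite lef_pV2 ?posrE ?ltr0n ?ler_nat.
lra.
Qed.

End StirlingRemainder.

(* C(n + k - 1, n) = (n + k)! k / (n! k! (n + k)), without division. *)
Lemma binom_pred_fact n k : (0 < k)%N ->
  ('C(n + k - 1, n) * n`! * k`! * (n + k) = (n + k)`! * k)%N.
Proof.
case: k => [//|j] _; rewrite addnS subn1 /= !factS.
by rewrite -(bin_fact (leq_addr j n)) addKn; ring.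
Qed.

Section Asymptotics.
Variable R : realType.
Implicit Types (t : R) (n m k : nat).

(* ln C(n + k - 1, n) expressed through the Stirling remainder; the linear
   terms -x of the three factorials cancel. *)
Lemma ln_binom_stirling n k : (0 < n)%N -> (0 < k)%N ->
  ln ('C(n + k - 1, n))%:R =
    stirling_rem R (n + k) - stirling_rem R n - stirling_rem R k
    + ((n + k)%:R - 2^-1) * ln (n + k)%:R - (n%:R + 2^-1) * ln n%:R
    - (k%:R - 2^-1) * ln k%:R.
Proof.
move=> n0 k0; have nk0 : (0 < n + k)%N by rewrite addn_gt0 n0.
have bin0 : (0 < 'C(n + k - 1, n))%N by rewrite bin_gt0 -addnBA // leq_addr.
have := congr1 (fun z : nat => ln (z%:R : R)) (binom_pred_fact n k0).
rewrite /= !natrM !lnM ?posrE ?mulr_gt0 ?ltr0n ?fact_gt0 // => fact_eq.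
have -> : ln ('C(n + k - 1, n))%:R = ln (n + k)`!%:R + ln k%:R - ln n`!%:R
  - ln k`!%:R - ln (n + k)%:R :> R by lra.
by rewrite /stirling_rem natrD; lra.
Qed.

Lemma rhs_asym_gt0 t n : 0 < t -> 0 < rhs_asym t n.
Proof.
move=> t0; rewrite /rhs_asym mulr_gt0 ?sqrtr_gt0 ?exprn_gt0 //.
  by rewrite divr_gt0 //; lra.
by rewrite divr_gt0 ?mulr_gt0 ?powR_gt0 //; lra.
Qed.

Lemma ln_rhs_asym t n : 0 < t ->
  ln (rhs_asym t n) = ln (2 * (t + 1) / (2 * t + 1)) / 2
    + n%:R * ((2 * t + 1) * ln (2 * t + 1) - t * ln (4 * t) - (t + 1) * ln (t + 1)).
Proof.
move=> t0; rewrite /rhs_asym; set q := 2 * (t + 1) / (2 * t + 1).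
set K := (2 * t + 1) `^ (2 * t + 1) / _.
have q0 : 0 < q by rewrite divr_gt0 //; lra.
have pos4t : 0 < (4 * t) `^ t * (t + 1) `^ (t + 1).
  by rewrite mulr_gt0 // powR_gt0 //; lra.
have K0 : 0 < K by rewrite divr_gt0 ?powR_gt0 //; lra.
rewrite [LHS]lnM ?posrE ?sqrtr_gt0 ?exprn_gt0 // lnXn // -[ln K *+ n]mulr_natl.
congr (_ + _).
  have sq0 : 0 < Num.sqrt q by rewrite sqrtr_gt0.
  have sq := lnXn 2 sq0; rewrite sqr_sqrtr ?ltW // in sq.
  by rewrite sq mulr2n; field.
have t1 : 0 < t + 1 by lra.
have t21 : 0 < 2 * t + 1 by lra.
rewrite /K ln_div ?posrE ?powR_gt0 // lnM ?posrE ?powR_gt0 ?mulr_gt0 //.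
by rewrite !ln_powR; lra.
Qed.

(* The exact identity behind the asymptotics: for m = t n, all main terms of
   ln E - ln rhs cancel (as does the constant of Stirling's formula), leaving
   only Stirling remainders. *)
Lemma expect_prod_div_rhs t n m : 0 < t -> (0 < n)%N -> m%:R = t * n%:R ->
  expect_prod R m n / rhs_asym t n =
  expR (stirling_rem R (n + 2 * m) + stirling_rem R m
        - stirling_rem R (2 * m) - stirling_rem R (n + m)).
Proof.
move=> t0 n0 mtn; have N0 : 0 < (n%:R : R) by rewrite ltr0n.
have t1 : 0 < t + 1 by lra.
have t21 : 0 < 2 * t + 1 by lra.
have m0 : (0 < m)%N by rewrite -(ltr0n R) mtn mulr_gt0.
have m20 : (0 < 2 * m)%N by rewrite muln_gt0 m0.
have binom_gt0 k : (0 < k)%N -> 0 < ('C(n + k - 1, n))%:R :> R.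
  by move=> k0; rewrite ltr0n bin_gt0 -addnBA // leq_addr.
have E0 := binom_gt0 _ m0; have E1 := binom_gt0 _ m20; have rhs0 := rhs_asym_gt0 n t0.
rewrite expect_prod_binom -[LHS]lnK ?posrE ?divr_gt0 //; congr expR.
rewrite !ln_div ?posrE ?divr_gt0 // !ln_binom_stirling // ln_rhs_asym //.
have lnMn (a : R) : 0 < a -> ln (a * n%:R) = ln a + ln n%:R.
  by move=> a0; rewrite lnM ?posrE.
rewrite (_ : (n + 2 * m)%:R = (2 * t + 1) * n%:R); last by rewrite natrD natrM mtn; ring.
rewrite (_ : (2 * m)%:R = (2 * t) * n%:R); last by rewrite natrM mtn; ring.
rewrite (_ : (n + m)%:R = (t + 1) * n%:R); last by rewrite natrD mtn; ring.
rewrite mtn !lnMn ?mulr_gt0 // ln_div ?posrE ?mulr_gt0 // !lnM ?posrE //.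
by rewrite (_ : (4 : R) = 2 * 2) ?lnM ?posrE //; ring.
Qed.

Lemma expR_sub1_le (D : R) : `|D| <= 2^-1 -> `|expR D - 1| <= 2 * `|D|.
Proof.
rewrite ler_norml => /andP[Dlo Dhi]; have e0 := expR_gt0 D.
have lo : 1 + D <= expR D := expR_ge1Dx D.
case: (lerP D 0) => D0.
  have : expR D <= 1 by rewrite expR_le1.
  by rewrite (ler0_norm D0) ler_norml; lra.
(* exp D (1 - D) <= exp D exp (-D) = 1, so exp D <= 2 and exp D - 1 <= D exp D *)
have up : expR D * (1 - D) <= 1.
  rewrite -[X in _ <= X]expR0 -(subrr D) expRD.
  by apply: ler_wpM2l; [exact: ltW | exact: expR_ge1Dx].
have e2 : expR D <= 2 by nra.
by rewrite (gtr0_norm D0) ler_norml; nra.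
Qed.

(* E / rhs -> 1 along m = t n: for m large the Stirling remainders in the
   exponent are at most 1/m in total. *)
Lemma expect_prod_div_rhs_cvg t : 0 < t -> forall eps : R, 0 < eps ->
  exists N : nat, forall n m : nat, (N <= n)%N -> m%:R = t * n%:R ->
    `|expect_prod R m n / rhs_asym t n - 1| < eps.
Proof.
move=> t0 eps e0; have e4 : 0 < 4 / eps by rewrite divr_gt0.
set B := (4 / eps + 2) / t; have B0 : 0 <= B by rewrite divr_ge0 ?ltW //; lra.
exists (Num.bound B) => n m Nn mtn.
have nB : B < n%:R by apply: lt_le_trans (archi_boundP B0) _; rewrite ler_nat.
have n0 : (0 < n)%N by rewrite -(ltr0n R); apply: le_lt_trans nB.
have mB : 4 / eps + 2 < m%:R.
  have tB : t * B = 4 / eps + 2 by rewrite /B mulrC divfK // gt_eqF.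
  by rewrite mtn -tB ltr_pM2l.
have M0 : 0 < (m%:R : R) by lra.
have m0 : (0 < m)%N by rewrite -(ltr0n R).
have m2m : (m <= 2 * m)%N by rewrite leq_pmull.
rewrite expect_prod_div_rhs //; set D := stirling_rem R _ + _ - _ - _.
have D_le : `|D| <= m%:R^-1.
  have c1 := stirling_rem_cauchy R m0 (leq_trans m2m (leq_addl n _)) m2m.
  have c2 := stirling_rem_cauchy R m0 (leqnn m) (leq_addl n m).
  have -> : D = (stirling_rem R (n + 2 * m) - stirling_rem R (2 * m))
                + (stirling_rem R m - stirling_rem R (n + m)) by rewrite /D; ring.
  by apply: le_trans (ler_normD _ _) _; lra.
have m_eps : m%:R^-1 <= eps / 4 by rewrite -[eps / 4]invf_div lef_pV2 ?posrE //; lra.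
have m_half : (m%:R : R)^-1 <= 2^-1 by rewrite lef_pV2 ?posrE //; lra.
by have := expR_sub1_le (le_trans D_le m_half); lra.
Qed.

Lemma rhs_asym1 n : rhs_asym (1 : R) n = Num.sqrt (4 / 3) * (27 / 16) ^+ n.
Proof.
have three : 2 * 1 + 1 = 3%:R :> R by ring.
have two : 1 + 1 = 2%:R :> R by ring.
rewrite /rhs_asym three two mulr1 powRr1 // !powR_mulrn //.
by congr (Num.sqrt _ * _ ^+ n); field.
Qed.

End Asymptotics.

Theorem corollary2 (R : realType) (theta : R) (htheta : 0 < theta) :
  (forall eps : R, 0 < eps -> exists N : nat, forall n m : nat, (N <= n)%N ->
     m%:R = theta * n%:R ->
     `| expect_prod R m n / rhs_asym theta n - 1 | < eps)
  /\
  (forall eps : R, 0 < eps -> exists N : nat, forall n : nat, (N <= n)%N ->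
     `| expect_prod R n n / (Num.sqrt (4 / 3) * (27 / 16) ^+ n) - 1 | < eps).
Proof.
split; first exact: expect_prod_div_rhs_cvg.
move=> eps e0; have [N cvg1] := expect_prod_div_rhs_cvg ltr01 e0.
by exists N => n Nn; rewrite -rhs_asym1; apply: cvg1; rewrite ?mul1r.
Qed.
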